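(* With the notation of the context, let $N\ge2$, $\eta>0$ be a constant, and $Q$ a probability distribution on $\{\alpha_1,\dots,\alpha_N\}$. (i) If $Q(\alpha_i)<Q^*(\alpha_i)+\eta/N^2$ for all $i$, then $L(Q)<H(p)+D(p\|q)+\eta/N$. (ii) If $Q(\alpha_i)<Q^*(\alpha_i)+\eta/(N\lg N)$ for all $i$, then $L(Q)<H(p)+D(p\|q)+\eta/\lg N$. (iii) If $Q(\alpha_i)<Q^*(\alpha_i)+\eta/N$ for all $i$, then $L(Q)<H(p)+D(p\|q)+\eta$.
   Context: Let $\mathcal S$ be a finite alphabet with $|\mathcal S|\ge2$, $p$ a probability distribution on $\mathcal S$ with $p(s)>0$, $N_s$ ($s\in\mathcal S$) positive integers, $N=\sum_sN_s$, $q(s)=N_s/N$, $\lg=\log_2$, and $\kappa_s=\lceil\lg(N/N_s)\rceil$ (so $\kappa_s\ge1$ and $N\le 2^{\kappa_s}N_s<2N$). Let $\alpha_1,\dots,\alpha_N$ be the states. For a probability distribution $Q$ on $\{\alpha_1,\dots,\alpha_N\}$ define $L(Q)=\sum_s p(s)\sum_{i=1}^N Q(\alpha_i)\ell_s(i)$, where $\ell_s(i)=\kappa_s-1$ if $i\le 2^{\kappa_s}N_s-N$ and $\ell_s(i)=\kappa_s$ otherwise. (This is the average code length of the Yokoo–Dubé-type sAEDS, whose state $\alpha_i$ encodes $s$ with $\ell_s(i)$ bits, when $Q$ is its stationary distribution with states indexed in non-increasing order of $Q$.) $Q^*(\alpha_i)=\lg\frac{N+i}{N+i-1}$, which sums to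 1. $H(p)=-\sum p\lg p$, $D(p\|q)=\sum p\lg(p/q)$. *)

From HB Require Import structures.
From mathcomp Require Import all_boot all_order all_algebra.
From mathcomp Require Import reals exp.
Set Implicit Arguments. Unset Strict Implicit. Unset Printing Implicit Defensive.
Import Order.TTheory GRing.Theory Num.Theory.
Local Open Scope ring_scope.

Section Defs.
Variable R : realType.
Variable S : finType.

Definition lg (x : R) : R := ln x / ln 2.

Definition Ntot (Ns : S -> nat) : nat := (\sum_(s : S) Ns s)%N.

Definition qdist (Ns : S -> nat) (s : S) : R := (Ns s)%:R / (Ntot Ns)%:R.

Definition kappa (Ns : S -> nat) (s : S) : int :=
  Num.ceil (lg ((Ntot Ns)%:R / (Ns s)%:R)).

(* ell_s(i), states alpha_1..alpha_N, index i : 'I_N stands for alpha_(i+1) *)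
Definition ell (Ns : S -> nat) (s : S) (i : nat) : R :=
  let k := kappa Ns s in
  if ((i.+1)%:R <= (2 : R) ^ k * (Ns s)%:R - (Ntot Ns)%:R)
  then k%:~R - 1 else k%:~R.

Definition Lcode (p : S -> R) (Ns : S -> nat) (Q : 'I_(Ntot Ns) -> R) : R :=
  \sum_(s : S) p s * \sum_(i < Ntot Ns) Q i * ell Ns s i.

Definition Qstar (N : nat) (i : nat) : R :=
  lg ((N + i.+1)%:R / (N + i)%:R).

Definition entropy (p : S -> R) : R := - \sum_(s : S) p s * lg (p s).
Definition divergence (p q : S -> R) : R := \sum_(s : S) p s * lg (p s / q s).

End Defs.

From HB Require Import structures.
From mathcomp Require Import all_boot all_order all_algebra.
From mathcomp Require Import reals exp.
From mathcomp Require Import ring lra zify.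
Import Order.TTheory GRing.Theory Num.Theory.
Local Open Scope ring_scope.

(** For a symbol s with N_s = a and kappa_s = n, put m = 2^n a - N, so that
    0 <= m < N and state alpha_i spends n - [i <= m] bits on s.  Since Q sums
    to 1, the expected length is n - 1 plus the Q-mass of the states
    alpha_(m+1), ..., alpha_N.  The values of Q* on these states telescope to
    lg (2N / (N + m)) = 1 + lg N - n - lg a, so the expected length is below
    lg (N / N_s) + N eps whenever Q < Q* + eps pointwise.  Averaging over p
    gives H(p) + D(p||q) + N eps, and the three statements are the choices
    eps = eta / N^2, eta / (N lg N) and eta / N. *)

Section BinaryLogarithm.
Variable R : realType.
Implicit Types x y : R.

Lemma ln2_gt0 : 0 < ln (2 : R).
Proof. by apply: ln_gt0; rewrite ltr1n. Qed.

Lemma lg1 : lg (1 : R) = 0.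
Proof. by rewrite /lg ln1 mul0r. Qed.

Lemma lg2 : lg (2 : R) = 1.
Proof. by rewrite /lg divff // gt_eqF // ln2_gt0. Qed.

Lemma lgM x y : 0 < x -> 0 < y -> lg (x * y) = lg x + lg y.
Proof. by move=> x0 y0; rewrite /lg lnM ?posrE // mulrDl. Qed.

Lemma lg_div x y : 0 < x -> 0 < y -> lg (x / y) = lg x - lg y.
Proof. by move=> x0 y0; rewrite /lg ln_div ?posrE // mulrBl. Qed.

Lemma lg_exp2 (n : nat) : lg ((2 : R) ^+ n) = n%:R.
Proof. by rewrite /lg lnXn // mulrnAl divff // gt_eqF // ln2_gt0. Qed.

Lemma ltr_lg x y : 0 < x -> 0 < y -> (lg x < lg y) = (x < y).
Proof.
by move=> x0 y0; rewrite /lg ltr_pM2r ?invr_gt0 ?ln2_gt0 // ltr_ln ?posrE.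
Qed.

Lemma ler_lg x y : 0 < x -> 0 < y -> (lg x <= lg y) = (x <= y).
Proof.
by move=> x0 y0; rewrite /lg ler_pM2r ?invr_gt0 ?ln2_gt0 // ler_ln ?posrE.
Qed.

Lemma lg_nat_gt0 (n : nat) : (1 < n)%N -> 0 < lg (n%:R : R).
Proof. by move=> n1; rewrite -lg1 ltr_lg ?ltr1n // ltr0n ltnW. Qed.

End BinaryLogarithm.

Lemma big_ord_geq_nat (V : nmodType) (n m : nat) (F : nat -> V) : (m <= n)%N ->
  \sum_(i < n | (m <= i)%N) F i = \sum_(m <= i < n) F i.
Proof.
move=> mn; rewrite -(big_mkord (fun i => m <= i)%N F) (big_cat_nat _ mn) //=.
rewrite big_nat_cond big1 ?add0r; last by move=> i /andP[/andP[_ /ltn_geF->]].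
rewrite big_nat_cond [RHS]big_nat_cond; apply: eq_bigl => i.
by rewrite andbT andbC andbA andbb.
Qed.

Section StationaryBound.
Variable R : realType.

Lemma sum_Qstar (N m n : nat) : (0 < N)%N -> (m <= n)%N ->
  \sum_(m <= i < n) Qstar R N i = lg (N + n)%:R - lg (N + m)%:R.
Proof.
move=> N0 mn; apply: (telescope_sumr_eq (fun k => lg (N + k)%:R)) => // k _.
by rewrite /Qstar lg_div // ltr0n addn_gt0 N0.
Qed.

Lemma tail_mass_lt (N m : nat) (Q : 'I_N -> R) (eps : R) : (m < N)%N ->
  (forall i : 'I_N, (m <= i)%N -> Q i < Qstar R N i + eps) ->
  \sum_(i < N | (m <= i)%N) Q i <
    lg (N + N)%:R - lg (N + m)%:R + eps *+ (N - m).
Proof.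
move=> mN hQ; have N0 : (0 < N)%N by apply: leq_ltn_trans mN.
apply: (@lt_le_trans _ _ (\sum_(i < N | (m <= i)%N) (Qstar R N i + eps))).
  apply: ltr_sum => [|i /hQ //].
  by apply/hasP; exists (Ordinal mN); rewrite ?mem_index_enum.
rewrite big_split /= !big_ord_geq_nat ?(ltnW mN) // sumr_const_nat.
by rewrite sum_Qstar // ltnW.
Qed.

End StationaryBound.

Section CodeLength.
Variables (R : realType) (S : finType) (Ns : S -> nat).
Hypothesis Ns_gt0 : forall s, (0 < Ns s)%N.

Let N := Ntot Ns.

Lemma Ns_le_Ntot s : (Ns s <= N)%N.
Proof. by rewrite /N /Ntot (bigD1 s) //= leq_addr. Qed.

Lemma Ntot_gt0 (s : S) : (0 < N)%N.
Proof. exact: leq_trans (Ns_gt0 s) (Ns_le_Ntot s). Qed.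

Lemma lg_Ntot_div s : lg (N%:R / (Ns s)%:R : R) = lg N%:R - lg (Ns s)%:R.
Proof. by rewrite lg_div ?ltr0n ?(Ntot_gt0 s). Qed.

Lemma kappa_spec s : exists2 n : nat,
  kappa R Ns s = n%:Z & (N <= 2 ^ n * Ns s < 2 * N)%N.
Proof.
have N0 := Ntot_gt0 s; have a0 := Ns_gt0 s.
have lgNa_ge0 : 0 <= lg (N%:R / (Ns s)%:R : R).
  by rewrite lg_Ntot_div subr_ge0 ler_lg ?ltr0n // ler_nat Ns_le_Ntot.
have k_ge0 : 0 <= kappa R Ns s.
  by rewrite /kappa ceil_ge0; apply: lt_le_trans lgNa_ge0; rewrite ltrN10.
exists `|kappa R Ns s|%N; first by rewrite gez0_abs.
have := ceil_ge (lg (N%:R / (Ns s)%:R : R)).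
have := ceilB1_lt (lg (N%:R / (Ns s)%:R : R)).
rewrite -/(kappa R Ns s) -[kappa R Ns s]gez0_abs // intrD lg_Ntot_div /=.
set n := `|kappa R Ns s|%N => hlo hhi; apply/andP; split.
  rewrite -(ler_nat R) natrM natrX -ler_lg ?mulr_gt0 ?exprn_gt0 ?ltr0n //.
  rewrite lgM ?exprn_gt0 ?ltr0n // lg_exp2; lra.
rewrite -(ltr_nat R) !natrM natrX -ltr_lg ?mulr_gt0 ?exprn_gt0 ?ltr0n //.
rewrite !lgM ?exprn_gt0 ?ltr0n // lg_exp2 lg2; lra.
Qed.

Lemma ell_kappa s (n : nat) : kappa R Ns s = n%:Z ->
  (N <= 2 ^ n * Ns s)%N ->
  forall i, ell R Ns s i = n%:R - (i < 2 ^ n * Ns s - N)%N%:R.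
Proof.
move=> kn hlo i.
rewrite /ell kn -exprnP -/N -natrX -natrM -(natrB _ hlo) ler_nat.
by case: ltnP; rewrite ?subr0.
Qed.

Lemma code_length_lt s (Q : 'I_N -> R) (eps : R) :
  0 <= eps -> \sum_(i < N) Q i = 1 ->
  (forall i : 'I_N, Q i < Qstar R N i + eps) ->
  \sum_(i < N) Q i * ell R Ns s i < lg N%:R - lg (Ns s)%:R + N%:R * eps.
Proof.
move=> eps0 Q1 hQ; have N0 := Ntot_gt0 s; have a0 := Ns_gt0 s.
have [n kn /andP[hlo hhi]] := kappa_spec s.
set m := (2 ^ n * Ns s - N)%N.
have mN : (m < N)%N by rewrite /m; lia.
have low_mass :
    \sum_(i < N) Q i * (i < m)%N%:R = 1 - \sum_(i < N | (m <= i)%N) Q i.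
  rewrite -[in RHS]Q1 [\sum_(i < N) Q i](bigID (fun i : 'I_N => m <= i)%N) /=.
  rewrite addrC addrK.
  rewrite [RHS]big_mkcond; apply: eq_bigr => i _.
  by rewrite -ltnNge; case: ifP => _; rewrite ?mulr1 ?mulr0.
have expected_length : \sum_(i < N) Q i * ell R Ns s i =
    n%:R - 1 + \sum_(i < N | (m <= i)%N) Q i.
  under eq_bigr do rewrite (ell_kappa _ _ kn hlo) mulrBr.
  by rewrite sumrB -mulr_suml Q1 mul1r low_mass; ring.
have tail := @tail_mass_lt R N m Q eps mN (fun i _ => hQ i).
have lg_2N : lg (N + N)%:R = 1 + lg N%:R :> R.
  by rewrite addnn -mul2n natrM lgM ?lg2 // ltr0n.
have lg_Nm : lg (N + m)%:R = n%:R + lg (Ns s)%:R :> R.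
  by rewrite /m subnKC // natrM natrX lgM ?exprn_gt0 ?ltr0n // lg_exp2.
have eps_le : eps *+ (N - m) <= N%:R * eps.
  by rewrite mulr_natl; apply: ler_wpMn2l; rewrite ?leq_subr.
rewrite expected_length; rewrite lg_2N lg_Nm in tail; lra.
Qed.

Lemma entropy_add_divergence (p : S -> R) : (forall s, 0 < p s) ->
  entropy p + divergence p (qdist R Ns) =
  \sum_s p s * (lg N%:R - lg (Ns s)%:R).
Proof.
move=> p0; rewrite /entropy /divergence -sumrN -big_split; apply: eq_bigr => s _.
have [N0 a0] : (0 : R) < N%:R /\ (0 : R) < (Ns s)%:R.
  by rewrite !ltr0n Ns_gt0 (Ntot_gt0 s).
by rewrite /= /qdist -/N lg_div ?divr_gt0 // lg_div //; ring.
Qed.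

Lemma Lcode_lt (p : S -> R) (Q : 'I_N -> R) (eps : R) :
  (forall s, 0 < p s) -> \sum_s p s = 1 ->
  0 <= eps -> \sum_(i < N) Q i = 1 ->
  (forall i : 'I_N, Q i < Qstar R N i + eps) ->
  Lcode p Q < entropy p + divergence p (qdist R Ns) + N%:R * eps.
Proof.
move=> p0 p1 eps0 Q1 hQ; rewrite entropy_add_divergence //.
have /card_gt0P[s0 _] : (0 < #|S|)%N.
  rewrite lt0n; apply/eqP => /card0_eq S0.
  by move: p1; rewrite big_pred0 // => /eqP; rewrite eq_sym oner_eq0.
rewrite [X in _ < _ + X](_ : _ = \sum_s p s * (N%:R * eps)); last first.
  by rewrite -mulr_suml p1 mul1r.
rewrite -big_split /=.
apply: ltr_sum => [|s _]; first by apply/hasP; exists s0; rewrite ?mem_index_enum.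
by rewrite -mulrDr ltr_pM2l // code_length_lt.
Qed.

End CodeLength.

Theorem lemma2 (R : realType) (S : finType) (p : S -> R) (Ns : S -> nat)
  (eta : R) (Q : 'I_(Ntot Ns) -> R) :
  (2 <= #|S|)%N ->
  (forall s, 0 < p s) -> \sum_(s : S) p s = 1 ->
  (forall s, (0 < Ns s)%N) ->
  (2 <= Ntot Ns)%N ->
  0 < eta ->
  (forall i, 0 <= Q i) -> \sum_(i < Ntot Ns) Q i = 1 ->
  let N := Ntot Ns in
  let HD := entropy p + divergence p (qdist R Ns) in
  [/\ (forall i : 'I_N, Q i < Qstar R N i + eta / (N%:R ^+ 2)) ->
        Lcode p Q < HD + eta / N%:R,
      (forall i : 'I_N, Q i < Qstar R N i + eta / (N%:R * lg N%:R)) ->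
        Lcode p Q < HD + eta / lg N%:R
    & (forall i : 'I_N, Q i < Qstar R N i + eta / N%:R) ->
        Lcode p Q < HD + eta].
Proof.
move=> _ p0 p1 Ns0 N2 eta0 _ Q1 N HD.
have N0 : (0 : R) < N%:R by rewrite ltr0n ltnW.
have lgN0 : (0 : R) < lg N%:R by exact: lg_nat_gt0.
have bound eps : 0 <= eps -> (forall i : 'I_N, Q i < Qstar R N i + eps) ->
    Lcode p Q < HD + N%:R * eps.
  by move=> eps0; apply: Lcode_lt.
have eta_ge0 := ltW eta0; have N_ge0 := ltW N0.
split => hQ.
- have -> : eta / N%:R = N%:R * (eta / N%:R ^+ 2) by field; rewrite gt_eqF.
  exact: bound _ (divr_ge0 eta_ge0 (exprn_ge0 2 N_ge0)) hQ.
- have -> : eta / lg N%:R = N%:R * (eta / (N%:R * lg N%:R)).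
    by field; rewrite !gt_eqF.
  exact: bound _ (divr_ge0 eta_ge0 (mulr_ge0 N_ge0 (ltW lgN0))) hQ.
- have -> : eta = N%:R * (eta / N%:R) by field; rewrite gt_eqF.
  exact: bound _ (divr_ge0 eta_ge0 N_ge0) hQ.
Qed.
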